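(* Let $G=(V,E,\tau u,\tau e,A)$ be a temporal attributed graph over a finite linearly ordered set of discrete time points, and fix a list of $n\ge 1$ aggregation attributes, so that for each node $u$ and each time point $t\in\tau u(u)$ the node has an attribute tuple $a(u,t)$. For finite sets of time points $\mathcal{T}_{old},\mathcal{T}_{new}$, let $G'[\mathcal{T}_{new}-\mathcal{T}_{old}]$ denote the aggregate (with COUNT, either distinct or non-distinct, as defined in the context) of the difference graph $G[\mathcal{T}_{new}-\mathcal{T}_{old}]$. Then, for the same choice of distinct or non-distinct counting: (i) (extending $\mathcal{T}_{old}$ by union) if $\mathcal{T}_{old}\subseteq\mathcal{T}'_{old}$, then for every aggregate node $a$ present in both $G'[\mathcal{T}_{new}-\mathcal{T}_{old}]$ and $G'[\mathcal{T}_{new}-\mathcal{T}'_{old}]$ its weight in $G'[\mathcal{T}_{new}-\mathcal{T}'_{old}]$ is at most its weight in $G'[\mathcal{T}_{new}-\mathcal{T}_{old}]$, and the same holds for every aggregate edge present in both (temporal aggregation with difference is monotonically decreasing when $\mathcal{T}_{old}$ is extended); (ii) (extending $\mathcal{T}_{new}$ by union) if $\mathcal{T}_{new}\subseteq\mathcal{T}'_{new}$, then for every aggregate node and every aggregate edge present in both $G'[\mathcal{T}_{new}-\mathcal{T}_{old}]$ and $G'[\mathcal{T}'_{new}-\mathcal{T}_{old}]$, its weight in $G'[\mathcal{T}'_{new}-\mathcal{T}_{old}]$ is at least its weight in $G'[\mathcal{T}_{new}-\mathcal{T}_{old}]$ (monotonically increasing when $\mathcal{T}_{new}$ is extended).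
   Context: A temporal attributed graph $G=(V,E,\tau u,\tau e,A)$ has node set $V$, edge set $E$ of pairs $(u,v)$ with $u,v\in V$, and timestamp functions: $\tau u(u)$ is the set of time points at which node $u$ exists and $\tau e(e)$ the set of time points at which edge $e$ exists; $A$ assigns to each $u\in V$ and $t\in\tau u(u)$ a tuple of attribute values. Given a chosen list of aggregation attributes, $a(u,t)$ denotes the tuple of values of those attributes of $u$ at time $t$. Difference graph $G[\mathcal{T}_1-\mathcal{T}_2]$: its edge set is $E_-=\{e\in E:\tau e(e)\cap\mathcal{T}_1\neq\emptyset \text{ and } \tau e(e)\cap\mathcal{T}_2=\emptyset\}$ with timestamps $\tau e_-(e)=\tau e(e)\cap\mathcal{T}_1$; its node set is $V_-=\{u\in V:\tau u(u)\cap\mathcal{T}_1\neq\emptyset \text{ and } (\tau u(u)\cap\mathcal{T}_2=\emptyset \text{ or } u \text{ is an endpoint of some edge in } E_-)\}$ with timestamps $\tau u_-(u)=\tau u(u)\cap\mathcal{T}_1$; attribute values are those of $G$ at the retained time points. Aggregation with COUNT of a temporal attributed graph $H$ (here $H=G[\mathcal{T}_1-\mathcal{T}_2]$ with node timestamps $\tau u_H$ and edge timestamps $\tau e_H$): there is an aggregate node for each tuple $a$ such that $a=a(u,t)$ for some node $u$ of $H$ and $t\in\tau u_H(u)$, and an aggregate edge $(a,b)$ for each pair of tuples such that some edge $(u,v)$ of $H$ and $t\in\tau e_H((u,v))$ satisfy $a(u,t)=a$, $a(v,t)=b$. In distinct aggregation the weight of aggregate node $a$ is the number of distinct nodes $u$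 of $H$ with $a(u,t)=a$ for some $t\in\tau u_H(u)$, and the weight of aggregate edge $(a,b)$ is the number of distinct edges $(u,v)$ of $H$ with $a(u,t)=a, a(v,t)=b$ for some $t\in\tau e_H((u,v))$. In non-distinct aggregation appearances are counted with multiplicity: the weight of $a$ is the number of pairs $(u,t)$ with $t\in\tau u_H(u)$ and $a(u,t)=a$, and the weight of $(a,b)$ is the number of pairs $((u,v),t)$ with $t\in\tau e_H((u,v))$, $a(u,t)=a$, $a(v,t)=b$. *)

From mathcomp Require Import all_boot.
Set Implicit Arguments. Unset Strict Implicit. Unset Printing Implicit Defensive.

(* Attribute values live
   in an eqType D; A u t is the tuple of all m attribute values of u at t
   (only meaningful for t \in tau_u u). *)
Record tgraph (V T : finType) (D : eqType) (m : nat) := TGraph {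
  tg_E  : {set V * V};
  tg_tu : V -> {set T};
  tg_te : V * V -> {set T};
  tg_A  : V -> T -> m.-tuple D
}.

Definition wf_tgraph V T D m (G : tgraph V T D m) : Prop :=
  forall e, e \in tg_E G -> tg_te G e \subset tg_tu G e.1 :&: tg_tu G e.2.

Section Defs.
Variables (V T : finType) (D : eqType) (m n : nat).
Variable (G : tgraph V T D m).
Variable (sel : n.-tuple 'I_m).

Definition aggval (u : V) (t : T) : n.-tuple D :=
  [tuple of map (tnth (tg_A G u t)) sel].

Definition diffE (T1 T2 : {set T}) : {set V * V} :=
  [set e in tg_E G | (tg_te G e :&: T1 != set0) && (tg_te G e :&: T2 == set0)].
Definition diff_te (T1 : {set T}) (e : V * V) : {set T} := tg_te G e :&: T1.
Definition diffV (T1 T2 : {set T}) : {set V} :=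
  [set u | (tg_tu G u :&: T1 != set0) &&
           ((tg_tu G u :&: T2 == set0) ||
            [exists e in diffE T1 T2, (e.1 == u) || (e.2 == u)])].
Definition diff_tu (T1 : {set T}) (u : V) : {set T} := tg_tu G u :&: T1.

Definition agg_node_present (T1 T2 : {set T}) (x : n.-tuple D) : Prop :=
  exists u, exists t, [/\ u \in diffV T1 T2, t \in diff_tu T1 u & aggval u t = x].
Definition agg_edge_present (T1 T2 : {set T}) (x y : n.-tuple D) : Prop :=
  exists e, exists t, [/\ e \in diffE T1 T2, t \in diff_te T1 e,
                          aggval e.1 t = x & aggval e.2 t = y].

Inductive count_mode := Distinct | NonDistinct.

Definition node_weight (c : count_mode) (T1 T2 : {set T}) (x : n.-tuple D) : nat :=
  match c with
  | Distinct => #|[set u in diffV T1 T2 |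
                   [exists t in diff_tu T1 u, aggval u t == x]]|
  | NonDistinct => #|[set p : V * T | [&& p.1 \in diffV T1 T2,
                   p.2 \in diff_tu T1 p.1 & aggval p.1 p.2 == x]]|
  end.

Definition edge_weight (c : count_mode) (T1 T2 : {set T}) (x y : n.-tuple D) : nat :=
  match c with
  | Distinct => #|[set e in diffE T1 T2 |
                   [exists t in diff_te T1 e, (aggval e.1 t == x) && (aggval e.2 t == y)]]|
  | NonDistinct => #|[set p : (V * V) * T | [&& p.1 \in diffE T1 T2,
                   p.2 \in diff_te T1 p.1, aggval p.1.1 p.2 == x & aggval p.1.2 p.2 == y]]|
  end.

End Defs.

(* The difference graph G[T1 - T2] is monotone in T1 and antitone in T2: every
   edge or node that survives for (T1, T2) survives for any larger T1 and smaller
   T2, with at least the same time stamps.  Hence each set counted by a COUNT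
   weight, distinct or not, only grows, and so does its cardinality. *)
From mathcomp Require Import all_boot.

Lemma setIS_eq0 {T : finType} {A B C : {set T}} :
  B \subset C -> A :&: C == set0 -> A :&: B == set0.
Proof. by move=> sBC /eqP AC0; rewrite -subset0 -AC0 setIS. Qed.

Lemma setIS_neq0 {T : finType} {A B C : {set T}} :
  B \subset C -> A :&: B != set0 -> A :&: C != set0.
Proof. by move=> sBC; apply: contraNN; apply: setIS_eq0. Qed.

Section DifferenceGraphMonotone.
Variables (V T : finType) (D : eqType) (m n : nat).
Variables (G : tgraph V T D m) (sel : n.-tuple 'I_m).
Variables (T1 T1' T2 T2' : {set T}).
Hypotheses (sT1 : T1 \subset T1') (sT2 : T2' \subset T2).

Lemma diffE_subset : diffE G T1 T2 \subset diffE G T1' T2'.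
Proof.
apply/subsetP => e; rewrite !inE => /and3P [-> te1 te2].
by rewrite (setIS_neq0 sT1 te1) (setIS_eq0 sT2 te2).
Qed.

Lemma diffV_subset : diffV G T1 T2 \subset diffV G T1' T2'.
Proof.
apply/subsetP => u; rewrite !inE => /andP [tu1 /orP tu2].
rewrite (setIS_neq0 sT1 tu1) /=; case: tu2 => [tu2 | /existsP [e /andP [eE ue]]].
  by rewrite (setIS_eq0 sT2 tu2).
by apply/orP; right; apply/existsP; exists e; rewrite ue (subsetP diffE_subset).
Qed.

Lemma node_weight_monotone c x :
  node_weight G sel c T1 T2 x <= node_weight G sel c T1' T2' x.
Proof.
have stu u : diff_tu G T1 u \subset diff_tu G T1' u by apply: setIS.
case: c => /=; apply/subset_leq_card/subsetP.
  move=> u; rewrite inE => /andP [uV /existsP [t /andP [tu ux]]].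
  rewrite inE (subsetP diffV_subset) //; apply/existsP; exists t.
  by rewrite ux (subsetP (stu u)).
move=> [u t]; rewrite inE /= => /and3P [uV tu ux].
by rewrite inE /= (subsetP diffV_subset) ?(subsetP (stu u)) ?ux.
Qed.

Lemma edge_weight_monotone c x y :
  edge_weight G sel c T1 T2 x y <= edge_weight G sel c T1' T2' x y.
Proof.
have ste e : diff_te G T1 e \subset diff_te G T1' e by apply: setIS.
case: c => /=; apply/subset_leq_card/subsetP.
  move=> e; rewrite inE => /andP [eE /existsP [t /andP [te exy]]].
  rewrite inE (subsetP diffE_subset) //; apply/existsP; exists t.
  by rewrite exy (subsetP (ste e)).
move=> [e t]; rewrite inE /= => /and4P [eE te ex ey].
by rewrite inE /= (subsetP diffE_subset) ?(subsetP (ste e)) ?ex ?ey.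
Qed.

End DifferenceGraphMonotone.

Theorem lemma2 (V T : finType) (D : eqType) (m n : nat)
    (G : tgraph V T D m) (sel : n.-tuple 'I_m) (c : count_mode) :
  0 < n -> wf_tgraph G ->
  (* (i) extending T_old *)
  (forall (Tnew Told Told' : {set T}), Told \subset Told' ->
     (forall x, agg_node_present G sel Tnew Told x ->
                agg_node_present G sel Tnew Told' x ->
        node_weight G sel c Tnew Told' x <= node_weight G sel c Tnew Told x) /\
     (forall x y, agg_edge_present G sel Tnew Told x y ->
                  agg_edge_present G sel Tnew Told' x y ->
        edge_weight G sel c Tnew Told' x y <= edge_weight G sel c Tnew Told x y)) /\
  (* (ii) extending T_new *)
  (forall (Tnew Tnew' Told : {set T}), Tnew \subset Tnew' ->
     (forall x, agg_node_present G sel Tnew Told x ->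
                agg_node_present G sel Tnew' Told x ->
        node_weight G sel c Tnew Told x <= node_weight G sel c Tnew' Told x) /\
     (forall x y, agg_edge_present G sel Tnew Told x y ->
                  agg_edge_present G sel Tnew' Told x y ->
        edge_weight G sel c Tnew Told x y <= edge_weight G sel c Tnew' Told x y)).
Proof.
move=> _ _; split=> [Tnew Told Told' sTold | Tnew Tnew' Told sTnew].
  by split=> *; [apply: node_weight_monotone | apply: edge_weight_monotone].
by split=> *; [apply: node_weight_monotone | apply: edge_weight_monotone].
Qed.
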